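(* Let $(P,Q)$ be a smooth solution on $[\tau_1,\tau_2]\times S^1$ of \[ P_{\tau\tau}-e^{-2\tau}P_{\theta\theta}-e^{2P}(Q_\tau^2-e^{-2\tau}Q_\theta^2)=0,\qquad Q_{\tau\tau}-e^{-2\tau}Q_{\theta\theta}+2(P_\tau Q_\tau-e^{-2\tau}P_\theta Q_\theta)=0 . \] Assume $\tau_2\ge\tau_1\ge 2$ and $1\le P(\tau,\theta)\le\tau-1$ for all $(\tau,\theta)\in[\tau_1,\tau_2]\times S^1$. Then $F(\tau)\le F(\tau_1)(\tau_1/\tau)^2$ for all $\tau\in[\tau_1,\tau_2]$.
   Context: $S^1=\mathbb{R}/2\pi\mathbb{Z}$. The function $F$ is \[ F(\tau)=\tfrac12\sup_{\theta\in S^1}\Big[(P_\tau-\tfrac1\tau P+e^{-\tau}P_\theta)^2+e^{2P}(Q_\tau+e^{-\tau}Q_\theta)^2\Big] +\tfrac12\sup_{\theta\in S^1}\Big[(P_\tau-\tfrac1\tau P-e^{-\tau}P_\theta)^2+e^{2P}(Q_\tau-e^{-\tau}Q_\theta)^2\Big]. \] *)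

From Stdlib Require Import Reals Lra.
From Coquelicot Require Import Coquelicot.
Open Scope R_scope.

Definition d_tau (f : R -> R -> R) : R -> R -> R :=
  fun t th => Derive (fun s => f s th) t.
Definition d_th (f : R -> R -> R) : R -> R -> R :=
  fun t th => Derive (fun s => f t s) th.

Definition cont2 (f : R -> R -> R) : Prop :=
  forall t th, continuous (fun p : R * R => f (fst p) (snd p)) (t, th).

Fixpoint Ck (k : nat) (f : R -> R -> R) : Prop :=
  match k with
  | O => cont2 f
  | S k' => cont2 f /\
      (forall t th, ex_derive (fun s => f s th) t /\ ex_derive (fun s => f t s) th) /\
      Ck k' (d_tau f) /\ Ck k' (d_th f)
  end.

Definition smooth2 (f : R -> R -> R) : Prop := forall k, Ck k f.

(* 2*pi periodicity in theta: functions on R x S^1, S^1 = R / 2 pi Z *)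
Definition periodic_th (f : R -> R -> R) : Prop :=
  forall t th, f t (th + 2 * PI) = f t th.

(* supremum over theta in S^1 (finite for continuous periodic data) *)
Definition sup_th (g : R -> R) : R := real (Lub_Rbar (fun y => exists th, y = g th)).

Definition F (P Q : R -> R -> R) (t : R) : R :=
  / 2 * sup_th (fun th =>
      (d_tau P t th - / t * P t th + exp (- t) * d_th P t th) ^ 2
      + exp (2 * P t th) * (d_tau Q t th + exp (- t) * d_th Q t th) ^ 2)
  + / 2 * sup_th (fun th =>
      (d_tau P t th - / t * P t th - exp (- t) * d_th P t th) ^ 2
      + exp (2 * P t th) * (d_tau Q t th - exp (- t) * d_th Q t th) ^ 2).

(* Write F = (M+ + M-) / 2, where M+- is the supremum over theta of
     A+- = (P_tau - P / tau +- e^-tau P_theta)^2 + e^2P (Q_tau +- e^-tau Q_theta)^2.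
   Along the characteristics theta' = -+ e^-tau the wave equations reduce the derivative of A+- to
     - A+- + (1 - 2 / tau) a+ a- + (1 - 2 P / tau) e^2P X+ X-,
   where a+- and X+- are the two bracketed terms. Since 1 <= P <= tau - 1 gives
   |1 - 2 P / tau| <= 1 - 2 / tau, AM-GM bounds it by -(1/2 + 1/tau) A+- + (1/2 - 1/tau) A-+.
   Following backwards the characteristic that ends at a maximum point of A+-(tau, .) transfers
   this bound to M+- as a bound on its left difference quotients; adding the two,
   M = M+ + M- satisfies M' <= -(2 / tau) M, i.e. tau^2 M is nonincreasing. *)

From Stdlib Require Import Reals Lra Psatz FunctionalExtensionality.
From Coquelicot Require Import Coquelicot.
Open Scope R_scope.

Lemma increment_le_of_local_le (g : R -> R) (a t eps d : R) :
  a <= t -> 0 < d ->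
  (forall r s, a <= r -> r < s -> s <= t -> s - r < d -> g s - g r <= eps * (s - r)) ->
  g t - g a <= eps * (t - a).
Proof.
  intros Hat Hd Hloc.
  destruct (Req_dec t a) as [<- | Hne]; [lra |].
  destruct (nfloor_ex ((t - a) / d)) as [n [_ Hn]].
  { apply Rdiv_le_0_compat; lra. }
  set (h := (t - a) / INR (S n)).
  assert (HSn : 0 < INR (S n)) by apply lt_0_INR, Nat.lt_0_succ.
  assert (Hh : 0 < h) by (apply Rdiv_lt_0_compat; lra).
  assert (Hhd : h < d).
  { apply Rlt_div_l in Hn; [| lra]. apply Rlt_div_l; [lra |].
    rewrite S_INR. lra. }
  assert (Hnh : a + INR (S n) * h = t) by (unfold h; field; lra).
  assert (Hk : forall k, (k <= S n)%nat -> g (a + INR k * h) - g a <= eps * (INR k * h)).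
  { induction k as [|k IH]; intros Hk.
    - rewrite Rmult_0_l, Rplus_0_r. lra.
    - specialize (IH ltac:(lia)).
      assert (Hkn : INR (S k) <= INR (S n)) by (apply le_INR; exact Hk).
      assert (0 <= INR k) by apply pos_INR.
      rewrite !S_INR in *.
      assert (Hstep := Hloc (a + INR k * h) (a + (INR k + 1) * h)).
      specialize (Hstep ltac:(nra) ltac:(nra) ltac:(nra) ltac:(nra)).
      nra. }
  specialize (Hk (S n) (Nat.le_refl _)). rewrite Hnh in Hk.
  replace (INR (S n) * h) with (t - a) in Hk by lra. exact Hk.
Qed.

Lemma square_mul_increment r s Mr Ms eta :
  0 < r < s -> 0 <= Mr -> 0 <= eta ->
  Ms - Mr <= (s - r) * (- (2 / s) * Ms + eta) ->
  s ^ 2 * Ms - r ^ 2 * Mr <= (s - r) * (3 * (s - r) * Mr + eta * s ^ 2).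
Proof.
  intros Hrs HMr Heta Hinc.
  destruct (Rle_lt_dec (s ^ 2 * Ms) (r ^ 2 * Mr)) as [Hle | Hgt].
  { assert (0 <= (s - r) * (3 * (s - r) * Mr + eta * s ^ 2)) by
      (apply Rmult_le_pos; nra).
    lra. }
  assert (Hs2 : s ^ 2 * (Ms - Mr) <= (s - r) * (- 2 * s * Ms + eta * s ^ 2)).
  { replace ((s - r) * (- 2 * s * Ms + eta * s ^ 2))
      with (s ^ 2 * ((s - r) * (- (2 / s) * Ms + eta))) by (field; lra).
    apply Rmult_le_compat_l; [nra | exact Hinc]. }
  assert (Hlin : - 2 * s * Ms + (s + r) * Mr <= 3 * (s - r) * Mr).
  { apply Rmult_le_reg_l with s; [lra |].
    assert (Mr * ((s - r) * (s + 2 * r)) <= Mr * ((s - r) * (3 * s)))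
      by (apply Rmult_le_compat_l; [lra | apply Rmult_le_compat_l; lra]).
    lra. }
  nra.
Qed.

Lemma square_mul_nonincreasing (M : R -> R) (a b : R) :
  0 < a ->
  (forall s, a <= s <= b -> 0 <= M s) ->
  (forall eta, 0 < eta -> exists d, 0 < d /\
     forall r s, a <= r -> r < s -> s <= b -> s - r < d ->
       M s - M r <= (s - r) * (- (2 / s) * M s + eta)) ->
  forall t, a <= t <= b -> t ^ 2 * M t <= a ^ 2 * M a.
Proof.
  intros Ha Hnn Hloc t Ht.
  (* A first pass with [eta = 1] bounds [M] on [[a, b]]; that bound controls the
     cross term in the increment of [s ^ 2 * M s]. *)
  set (K := M a + (b - a)).
  assert (HK : forall s, a <= s <= b -> M s <= K).
  { intros s Hs. destruct (Hloc 1 Rlt_0_1) as [d [Hd Hdec]].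
    enough (M s - M a <= 1 * (s - a)) by (unfold K; lra).
    apply (increment_le_of_local_le M a s 1 d); [lra | lra |].
    intros r u Hr Hru Hu Hdu.
    assert (0 <= 2 / u * M u) by
      (apply Rmult_le_pos; [apply Rdiv_le_0_compat | apply Hnn]; lra).
    specialize (Hdec r u Hr Hru ltac:(lra) Hdu). nra. }
  assert (HK0 : 0 <= K) by (apply Rle_trans with (M a); [apply Hnn | apply HK]; lra).
  assert (Hmain : forall eps, 0 < eps -> t ^ 2 * M t - a ^ 2 * M a <= eps * (t - a)).
  { intros eps Heps.
    set (eta := eps / (2 * b ^ 2)).
    assert (Heta : 0 < eta) by (apply Rdiv_lt_0_compat; nra).
    destruct (Hloc eta Heta) as [d [Hd Hdec]].
    apply (increment_le_of_local_le (fun s => s ^ 2 * M s) a t eps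
             (Rmin d (eps / (6 * K + 1))));
      [lra | apply Rmin_glb_lt; [lra | apply Rdiv_lt_0_compat; lra] |].
    intros r s Hr Hrs Hs Hrsd.
    assert (Hsd : s - r < d) by (eapply Rlt_le_trans; [exact Hrsd | apply Rmin_l]).
    assert (HsK : (s - r) * (6 * K + 1) <= eps).
    { apply Rle_div_r; [lra |]. left. eapply Rlt_le_trans; [exact Hrsd | apply Rmin_r]. }
    assert (Hinc := square_mul_increment r s (M r) (M s) eta ltac:(lra)
                      (Hnn r ltac:(lra)) ltac:(lra) (Hdec r s Hr Hrs ltac:(lra) Hsd)).
    assert (HMr : M r <= K) by (apply HK; lra).
    assert (Hs2 : eta * s ^ 2 <= eps / 2).
    { unfold eta.
      replace (eps / (2 * b ^ 2) * s ^ 2) with (eps / 2 * (s ^ 2 / b ^ 2)) by (field; lra).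
      assert (s ^ 2 / b ^ 2 <= 1) by (apply Rle_div_l; nra). nra. }
    assert (3 * (s - r) * M r + eta * s ^ 2 <= eps) by nra.
    eapply Rle_trans; [exact Hinc |].
    rewrite (Rmult_comm eps). apply Rmult_le_compat_l; lra. }
  apply Rle_plus_epsilon. intros eps Heps.
  assert (Hpos : 0 < eps / (t - a + 1)) by (apply Rdiv_lt_0_compat; lra).
  specialize (Hmain _ Hpos).
  assert (eps / (t - a + 1) * (t - a) = eps - eps / (t - a + 1)) by (field; lra).
  lra.
Qed.

Lemma increment_le_of_derive_le (x : R -> R) r s B : r < s ->
  (forall rho, r <= rho <= s -> exists D, is_derive x rho D /\ D <= B) ->
  x s - x r <= (s - r) * B.
Proof.
  intros Hrs Hder.
  assert (Hd : forall rho, r <= rho <= s -> is_derive x rho (Derive x rho) /\ Derive x rho <= B).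
  { intros rho Hrho. destruct (Hder rho Hrho) as [D [HD HDB]].
    rewrite (is_derive_unique _ _ _ HD). split; assumption. }
  destruct (MVT_gen x r s (Derive x)) as [c [Hc Hmvt]];
    rewrite ?Rmin_left, ?Rmax_right in * by lra.
  - intros z Hz. apply Hd. lra.
  - intros z Hz. apply continuity_pt_filterlim.
    apply (ex_derive_continuous (K := R_AbsRing) (V := R_NormedModule)).
    eexists. apply (Hd z Hz).
  - rewrite Hmvt. destruct (Hd c Hc) as [_ HB]. nra.
Qed.

Lemma exp_opp_lipschitz rho s : 0 <= rho <= s -> 0 <= exp (- rho) - exp (- s) <= s - rho.
Proof.
  intros H.
  assert (Hle1 : forall x, x <= 0 -> exp x <= 1).
  { intros x [Hx | ->]; [left; rewrite <- exp_0; apply exp_increasing, Hx | rewrite exp_0; lra]. }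
  assert (E : exp (- s) = exp (- rho) * exp (- (s - rho))) by (rewrite <- exp_plus; f_equal; ring).
  assert (H1 := exp_ineq1_le (- (s - rho))).
  assert (H2 := Hle1 (- rho) ltac:(lra)).
  assert (H3 := Hle1 (- (s - rho)) ltac:(lra)).
  assert (H4 := exp_pos (- rho)).
  rewrite E. split; nra.
Qed.

Section PeriodicSup.

Variable f : R -> R.
Hypothesis f_periodic : forall th, f (th + 2 * PI) = f th.

Lemma periodic_shift_nat n th : f (th + INR n * (2 * PI)) = f th.
Proof.
  induction n as [| n IH].
  - f_equal. simpl. ring.
  - rewrite S_INR.
    replace (th + (INR n + 1) * (2 * PI)) with (th + INR n * (2 * PI) + 2 * PI) by ring.
    rewrite f_periodic. exact IH.
Qed.

Lemma periodic_representative th : exists th', 0 <= th' <= 2 * PI /\ f th = f th'.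
Proof.
  assert (Hpi : 0 < 2 * PI) by (pose proof PI_RGT_0; lra).
  destruct (nfloor_ex (Rabs th / (2 * PI))) as [N [_ HN]].
  { apply Rdiv_le_0_compat; [apply Rabs_pos | exact Hpi]. }
  set (z := th + INR (S N) * (2 * PI)).
  assert (Hz : 0 <= z).
  { apply Rlt_div_l in HN; [| lra]. unfold z. rewrite S_INR.
    pose proof (Rle_abs (- th)). rewrite Rabs_Ropp in *. lra. }
  destruct (nfloor_ex (z / (2 * PI))) as [m [Hm1 Hm2]].
  { apply Rdiv_le_0_compat; lra. }
  apply Rle_div_r in Hm1; [| lra]. apply Rlt_div_l in Hm2; [| lra].
  exists (z - INR m * (2 * PI)). split; [lra |].
  rewrite <- (periodic_shift_nat (S N)), <- (periodic_shift_nat m (z - _)).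
  f_equal. unfold z. ring.
Qed.

Lemma sup_th_periodic : (forall th, continuity_pt f th) ->
  (forall th, f th <= sup_th f) /\ exists th0, 0 <= th0 <= 2 * PI /\ f th0 = sup_th f.
Proof.
  intros Hcont.
  destruct (continuity_ab_maj f 0 (2 * PI)) as [th0 [Hmax Hth0]].
  { pose proof PI_RGT_0. lra. }
  { intros th _. apply Hcont. }
  assert (Hle : forall th, f th <= f th0).
  { intros th. destruct (periodic_representative th) as [th' [Hth' ->]]. apply Hmax, Hth'. }
  assert (Hsup : sup_th f = f th0).
  { unfold sup_th. rewrite (is_lub_Rbar_unique _ (Finite (f th0))); [reflexivity |].
    split.
    - intros y [th ->]. apply Hle.
    - intros b Hb. apply Hb. exists th0. reflexivity. }
  rewrite Hsup. split; [exact Hle |]. exists th0. split; [exact Hth0 | reflexivity].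
Qed.

End PeriodicSup.

Lemma Derive_periodic (g : R -> R) T x :
  (forall y, g (y + T) = g y) -> Derive g (x + T) = Derive g x.
Proof.
  intros Hg. unfold Derive. f_equal. apply Lim_ext. intros h.
  replace (x + T + h) with (x + h + T) by ring. rewrite !Hg. reflexivity.
Qed.

Lemma differentiable_pt_lim_of_partials (f : R -> R -> R) x y :
  (forall u v, ex_derive (fun z => f z v) u) -> ex_derive (fun z => f x z) y ->
  cont2 (d_tau f) ->
  differentiable_pt_lim f x y (d_tau f x y) (d_th f x y).
Proof.
  intros Hex Hey Hcont.
  apply filterdiff_differentiable_pt_lim.
  eapply filterdiff_ext_lin.
  - apply (is_derive_filterdiff f x y (d_tau f)).
    + apply filter_forall. intros u. apply Derive_correct, Hex.
    + apply Derive_correct, Hey.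
    + apply Hcont.
  - unfold d_th. generalize (d_tau f x y) (Derive (fun z => f x z) y).
    intros lx ly u. reflexivity.
Qed.

Lemma is_derive_along_curve (f : R -> R -> R) (c : R -> R) s dc :
  Ck 1 f -> is_derive c s dc ->
  is_derive (fun r => f r (c r)) s (d_tau f s (c s) + dc * d_th f s (c s)).
Proof.
  intros [_ [Hex [Hcont _]]] Hc.
  apply is_derive_Reals.
  replace (d_tau f s (c s) + dc * d_th f s (c s))
    with (d_tau f s (c s) * 1 + d_th f s (c s) * dc) by ring.
  apply (derivable_pt_lim_comp_2d f (fun r => r) c).
  - apply (differentiable_pt_lim_of_partials f s (c s));
      [intros u v; exact (proj1 (Hex u v)) | exact (proj2 (Hex s (c s))) | exact Hcont].
  - apply derivable_pt_lim_id.
  - apply is_derive_Reals, Hc.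
Qed.

Lemma cont2_continuity_2d_pt f t th : cont2 f -> continuity_2d_pt f t th.
Proof. intros Hf. apply continuity_2d_pt_filterlim, Hf. Qed.

Lemma d_tau_d_th_comm f : Ck 2 f -> forall t th, d_tau (d_th f) t th = d_th (d_tau f) t th.
Proof.
  intros [_ [Hex [[_ [Hext [_ Hc2]]] [_ [Hexth [Hc1 _]]]]]] t th.
  apply Schwarz.
  - exists (mkposreal 1 Rlt_0_1). intros u v _ _.
    exact (conj (proj1 (Hex u v)) (conj (proj2 (Hex u v))
             (conj (proj1 (Hexth u v)) (proj2 (Hext u v))))).
  - apply cont2_continuity_2d_pt, Hc1.
  - apply cont2_continuity_2d_pt, Hc2.
Qed.

Lemma continuity_pt_of_2d_snd f t th : continuity_2d_pt f t th -> continuity_pt (fun s => f t s) th.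
Proof.
  intros Hf eps Heps. destruct (Hf (mkposreal eps Heps)) as [d Hd].
  exists d. split; [apply cond_pos |]. intros y [_ Hy]. simpl in *. unfold R_dist in *.
  apply Hd; [rewrite Rminus_eq_0, Rabs_R0; apply cond_pos | exact Hy].
Qed.

Lemma sup_th_continuous_periodic (C : R -> R -> R) u :
  (forall th, continuity_2d_pt C u th) -> (forall th, C u (th + 2 * PI) = C u th) ->
  (forall th, C u th <= sup_th (C u)) /\
  exists th0, 0 <= th0 <= 2 * PI /\ C u th0 = sup_th (C u).
Proof.
  intros HC HCp. apply sup_th_periodic; [exact HCp |].
  intros th. apply continuity_pt_of_2d_snd, HC.
Qed.

Lemma characteristic_shift_le sg th0 rho s : sg = 1 \/ sg = -1 -> 0 <= rho <= s ->
  Rabs (th0 + sg * (exp (- rho) - exp (- s)) - th0) <= s - rho.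
Proof.
  intros Hsg Hrho.
  replace (th0 + sg * (exp (- rho) - exp (- s)) - th0) with (sg * (exp (- rho) - exp (- s)))
    by ring.
  pose proof (exp_opp_lipschitz rho s Hrho).
  rewrite Rabs_mult, (Rabs_pos_eq (_ - _)) by lra.
  destruct Hsg as [-> | ->]; rewrite ?Rabs_R1, ?Rabs_m1; lra.
Qed.

Lemma decay_rate_le rho s Ap Bm Sp Sm eta :
  2 <= rho <= s -> Sp - eta < Ap -> Bm < Sm + eta -> 0 <= Sp -> 0 <= Sm ->
  - (/ 2 + / rho) * Ap + (/ 2 - / rho) * Bm <= - (/ 2 + / s) * Sp + (/ 2 - / s) * Sm + eta.
Proof.
  intros Hrs HA HB HSp HSm.
  assert (Hi : / s <= / rho) by (apply Rinv_le_contravar; lra).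
  assert (Hi2 : / rho <= / 2) by (apply Rinv_le_contravar; lra).
  assert (0 < / s) by (apply Rinv_0_lt_compat; lra).
  nra.
Qed.

Section SupAlongCharacteristics.

Variables (A B : R -> R -> R) (sg a b : R).
Hypothesis sg_unit : sg = 1 \/ sg = -1.
Hypothesis two_le_a : 2 <= a.
Hypothesis A_cont : forall s th, a <= s <= b -> continuity_2d_pt A s th.
Hypothesis B_cont : forall s th, a <= s <= b -> continuity_2d_pt B s th.
Hypothesis A_nonneg : forall s th, a <= s <= b -> 0 <= A s th.
Hypothesis B_nonneg : forall s th, a <= s <= b -> 0 <= B s th.
Hypothesis A_periodic : forall s th, A s (th + 2 * PI) = A s th.
Hypothesis B_periodic : forall s th, B s (th + 2 * PI) = B s th.
Hypothesis A_characteristic : forall th0 s0 s, a <= s <= b -> exists D,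
  is_derive (fun r => A r (th0 + sg * (exp (- r) - exp (- s0)))) s D /\
  D <= - (/ 2 + / s) * A s (th0 + sg * (exp (- s) - exp (- s0)))
       + (/ 2 - / s) * B s (th0 + sg * (exp (- s) - exp (- s0))).

Lemma sup_th_step eta : 0 < eta -> exists d, 0 < d /\
  forall r s, a <= r -> r < s -> s <= b -> s - r < d ->
    sup_th (A s) - sup_th (A r)
    <= (s - r) * (- (/ 2 + / s) * sup_th (A s) + (/ 2 - / s) * sup_th (B s) + eta).
Proof.
  intros Heta.
  destruct (uniform_continuity_2d A a b (-1) (2 * PI + 1)) with (eps := mkposreal eta Heta)
    as [dA HdA]; [intros; apply A_cont; lra |].
  destruct (uniform_continuity_2d B a b (-1) (2 * PI + 1)) with (eps := mkposreal eta Heta)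
    as [dB HdB]; [intros; apply B_cont; lra |].
  exists (Rmin 1 (Rmin dA dB)).
  split; [apply Rmin_glb_lt; [lra | apply Rmin_glb_lt; apply cond_pos] |].
  intros r s Har Hrs Hsb Hd.
  apply Rmin_Rgt_l in Hd as [Hd1 Hd]. apply Rmin_Rgt_l in Hd as [HdA' HdB'].
  destruct (sup_th_continuous_periodic A s (fun th => A_cont s th ltac:(lra)) (A_periodic s))
    as [_ [thp [Hthp Hmax]]].
  destruct (sup_th_continuous_periodic A r (fun th => A_cont r th ltac:(lra)) (A_periodic r))
    as [HleA _].
  destruct (sup_th_continuous_periodic B s (fun th => B_cont s th ltac:(lra)) (B_periodic s))
    as [HleB _].
  assert (HSp : 0 <= sup_th (A s)) by (rewrite <- Hmax; apply A_nonneg; lra).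
  assert (HSm : 0 <= sup_th (B s)) by (eapply Rle_trans; [apply (B_nonneg s 0) | apply HleB]; lra).
  (* Follow the characteristic through a maximum point of [A s]: it starts below
     [sup_th (A r)] and ends at [sup_th (A s)]. *)
  set (x := fun rho => A rho (thp + sg * (exp (- rho) - exp (- s)))).
  assert (Hxs : x s = sup_th (A s)).
  { unfold x. rewrite Rminus_eq_0, Rmult_0_r, Rplus_0_r. exact Hmax. }
  assert (Hxr : x r <= sup_th (A r)) by apply HleA.
  enough (x s - x r <= (s - r) * (- (/ 2 + / s) * sup_th (A s) + (/ 2 - / s) * sup_th (B s) + eta))
    by lra.
  apply increment_le_of_derive_le; [exact Hrs |].
  intros rho Hrho.
  destruct (A_characteristic thp s rho ltac:(lra)) as [D [HD HDle]].
  exists D. split; [exact HD |].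
  assert (Hc := characteristic_shift_le sg thp rho s sg_unit ltac:(lra)).
  set (c := thp + sg * (exp (- rho) - exp (- s))) in *.
  pose proof (proj1 (Rabs_le_between _ _) Hc).
  assert (Hrho_s : Rabs (rho - s) = s - rho) by (rewrite Rabs_left1; lra).
  assert (HA := HdA s thp rho c ltac:(lra) ltac:(lra) ltac:(lra) ltac:(lra) ltac:(lra) ltac:(lra)).
  assert (HB := HdB s c rho c ltac:(lra) ltac:(lra) ltac:(lra) ltac:(lra) ltac:(lra)).
  rewrite Rminus_eq_0, Rabs_R0 in HB. specialize (HB (cond_pos dB)).
  apply Rabs_lt_between in HA. apply Rabs_lt_between in HB. simpl in HA, HB.
  rewrite Hmax in HA. pose proof (HleB c).
  eapply Rle_trans; [exact HDle |].
  apply decay_rate_le; lra.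
Qed.

End SupAlongCharacteristics.

Definition energy (sg : R) (P Q : R -> R -> R) (t th : R) : R :=
  (d_tau P t th - / t * P t th + sg * exp (- t) * d_th P t th) ^ 2
  + exp (2 * P t th) * (d_tau Q t th + sg * exp (- t) * d_th Q t th) ^ 2.

Definition gowdy_equations (P Q : R -> R -> R) (t th : R) : Prop :=
  d_tau (d_tau P) t th - exp (-2 * t) * d_th (d_th P) t th
    - exp (2 * P t th) * ((d_tau Q t th) ^ 2 - exp (-2 * t) * (d_th Q t th) ^ 2) = 0 /\
  d_tau (d_tau Q) t th - exp (-2 * t) * d_th (d_th Q) t th
    + 2 * (d_tau P t th * d_tau Q t th - exp (-2 * t) * d_th P t th * d_th Q t th) = 0.

Lemma exp_neg2_mul t : exp (-2 * t) = exp (- t) ^ 2.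
Proof. replace (-2 * t) with (- t + - t) by ring. rewrite exp_plus. ring. Qed.

Lemma energy_dissipation_bound k m a b X Y E :
  0 <= k -> - k <= m <= k -> 0 <= E ->
  - (a ^ 2 + E * X ^ 2) + k * a * b + m * E * X * Y
  <= - (1 - k / 2) * (a ^ 2 + E * X ^ 2) + k / 2 * (b ^ 2 + E * Y ^ 2).
Proof.
  intros Hk Hm HE.
  assert (Hab : k * a * b <= k / 2 * (a ^ 2 + b ^ 2)).
  { assert (0 <= k * (a - b) ^ 2) by (apply Rmult_le_pos; [lra | apply pow2_ge_0]). nra. }
  assert (HXY : m * X * Y <= k / 2 * (X ^ 2 + Y ^ 2)).
  { assert (0 <= k * (X - Y) ^ 2) by (apply Rmult_le_pos; [lra | apply pow2_ge_0]).
    assert (0 <= k * (X + Y) ^ 2) by (apply Rmult_le_pos; [lra | apply pow2_ge_0]).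
    destruct (Rle_lt_dec 0 (X * Y)); nra. }
  assert (E * (m * X * Y) <= E * (k / 2 * (X ^ 2 + Y ^ 2))) by (apply Rmult_le_compat_l; lra).
  nra.
Qed.

Lemma coupling_coefficient_bounds s p : 2 <= s -> 1 <= p <= s - 1 ->
  0 <= 1 - 2 / s /\ - (1 - 2 / s) <= 1 - 2 * p / s <= 1 - 2 / s.
Proof.
  intros Hs Hp. unfold Rdiv.
  assert (Hi : s * / s = 1) by (field; lra).
  assert (0 < / s) by (apply Rinv_0_lt_compat; lra).
  split; [| split]; nra.
Qed.

(* [p], [pt], [pth], [ptth], ... stand for P, P_tau, P_theta, P_tau_theta, ... at one point,
   [e] for [exp (- s)] and [E] for [exp (2 * P)]; [dp], [dpt], ... are the derivatives of
   [p], [pt], ... along the characteristic. *)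
Lemma characteristic_energy_identity sg s e E p pt pth qt qth ptt ptth pthth qtt qtth qthth
    dp dpt dpth dqt dqth :
  sg = 1 \/ sg = -1 -> s <> 0 ->
  ptt - e ^ 2 * pthth - E * (qt ^ 2 - e ^ 2 * qth ^ 2) = 0 ->
  qtt - e ^ 2 * qthth + 2 * (pt * qt - e ^ 2 * pth * qth) = 0 ->
  dp = pt - sg * e * pth -> dpt = ptt - sg * e * ptth -> dpth = ptth - sg * e * pthth ->
  dqt = qtt - sg * e * qtth -> dqth = qtth - sg * e * qthth ->
  let a := pt - / s * p + sg * e * pth in
  let X := qt + sg * e * qth in
  2 * a * (dpt + / s ^ 2 * p - / s * dp - sg * e * pth + sg * e * dpth)
  + E * (2 * dp * X ^ 2 + 2 * X * (dqt - sg * e * qth + sg * e * dqth))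
  = - (a ^ 2 + E * X ^ 2) + (1 - 2 / s) * a * (pt - / s * p - sg * e * pth)
    + (1 - 2 * p / s) * E * X * (qt - sg * e * qth).
Proof.
  intros Hsg Hs HP HQ -> -> -> -> -> a X. unfold a, X.
  replace ptt with (e ^ 2 * pthth + E * (qt ^ 2 - e ^ 2 * qth ^ 2)) by lra.
  replace qtt with (e ^ 2 * qthth - 2 * (pt * qt - e ^ 2 * pth * qth)) by lra.
  destruct Hsg as [-> | ->]; field; exact Hs.
Qed.

Lemma is_derive_energy_form sg (p pt pth qt qth : R -> R) dp dpt dpth dqt dqth s :
  s <> 0 ->
  is_derive p s dp -> is_derive pt s dpt -> is_derive pth s dpth ->
  is_derive qt s dqt -> is_derive qth s dqth ->
  is_derive (fun r => (pt r - / r * p r + sg * exp (- r) * pth r) ^ 2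
                      + exp (2 * p r) * (qt r + sg * exp (- r) * qth r) ^ 2) s
    (2 * (pt s - / s * p s + sg * exp (- s) * pth s)
       * (dpt + / s ^ 2 * p s - / s * dp - sg * exp (- s) * pth s + sg * exp (- s) * dpth)
     + exp (2 * p s) * (2 * dp * (qt s + sg * exp (- s) * qth s) ^ 2
       + 2 * (qt s + sg * exp (- s) * qth s)
           * (dqt - sg * exp (- s) * qth s + sg * exp (- s) * dqth))).
Proof.
  intros Hs Hp Hpt Hpth Hqt Hqth.
  auto_derive.
  - repeat split; try exact Hs; eexists; eassumption.
  - replace (Derive (fun x => p x) s) with dp by (symmetry; apply is_derive_unique, Hp).
    replace (Derive (fun x => pt x) s) with dpt by (symmetry; apply is_derive_unique, Hpt).
    replace (Derive (fun x => pth x) s) with dpth by (symmetry; apply is_derive_unique, Hpth).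
    replace (Derive (fun x => qt x) s) with dqt by (symmetry; apply is_derive_unique, Hqt).
    replace (Derive (fun x => qth x) s) with dqth by (symmetry; apply is_derive_unique, Hqth).
    field. exact Hs.
Qed.

Lemma energy_derivative_along_characteristic sg P Q th0 s0 s :
  sg = 1 \/ sg = -1 -> smooth2 P -> smooth2 Q -> 2 <= s ->
  let c := th0 + sg * (exp (- s) - exp (- s0)) in
  gowdy_equations P Q s c -> 1 <= P s c <= s - 1 ->
  exists D,
    is_derive (fun r => energy sg P Q r (th0 + sg * (exp (- r) - exp (- s0)))) s D /\
    D <= - (/ 2 + / s) * energy sg P Q s c + (/ 2 - / s) * energy (- sg) P Q s c.
Proof.
  intros Hsg HP HQ Hs c [HeqP HeqQ] HPb.
  assert (Hc : is_derive (fun r => th0 + sg * (exp (- r) - exp (- s0))) s (- sg * exp (- s)))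
    by (auto_derive; [easy | ring]).
  destruct (HP 2%nat) as [_ [_ [HPt HPth]]]. destruct (HQ 2%nat) as [_ [_ [HQt HQth]]].
  eexists. split.
  { apply is_derive_energy_form; [lra | ..];
      (apply is_derive_along_curve; [| exact Hc]);
      [exact (HP 1%nat) | exact HPt | exact HPth | exact HQt | exact HQth]. }
  rewrite (characteristic_energy_identity sg s (exp (- s)) (exp (2 * P s c)) (P s c)
     (d_tau P s c) (d_th P s c) (d_tau Q s c) (d_th Q s c)
     (d_tau (d_tau P) s c) (d_th (d_tau P) s c) (d_th (d_th P) s c)
     (d_tau (d_tau Q) s c) (d_th (d_tau Q) s c) (d_th (d_th Q) s c));
    [| exact Hsg | lra | rewrite <- exp_neg2_mul; exact HeqP | rewrite <- exp_neg2_mul; exact HeqQ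
     | .. ];
    try (rewrite ?(d_tau_d_th_comm P (HP 2%nat)), ?(d_tau_d_th_comm Q (HQ 2%nat)); unfold c; ring).
  destruct (coupling_coefficient_bounds s (P s c) Hs HPb) as [Hk Hm].
  eapply Rle_trans.
  { apply energy_dissipation_bound; [exact Hk | exact Hm | left; apply exp_pos]. }
  right. unfold energy. field. lra.
Qed.

Lemma continuous_energy sg P Q t th : t <> 0 -> Ck 1 P -> Ck 1 Q ->
  continuity_2d_pt (energy sg P Q) t th.
Proof.
  intros Ht [HP [_ [HPt HPth]]] [_ [_ [HQt HQth]]].
  apply (cont2_continuity_2d_pt _ t th) in HP, HPt, HPth, HQt, HQth.
  assert (Hsq : forall x, continuity_pt (fun y => y ^ 2) x)
    by (intros x; apply derivable_continuous_pt, derivable_pt_pow).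
  assert (Hexp : forall x, continuity_pt exp x)
    by (intros x; apply derivable_continuous_pt, derivable_pt_exp).
  assert (Hcst : forall c, continuity_2d_pt (fun _ _ => c) t th)
    by (intros c; apply continuity_2d_pt_const).
  assert (Hdamp : continuity_2d_pt (fun u _ => sg * exp (- u)) t th).
  { apply continuity_2d_pt_mult; [apply Hcst |].
    apply (continuity_1d_2d_pt_comp exp (fun u _ => - u)); [apply Hexp |].
    apply (continuity_2d_pt_opp (fun u _ => u)), continuity_2d_pt_id1. }
  unfold energy.
  apply continuity_2d_pt_plus.
  - apply (continuity_1d_2d_pt_comp (fun y => y ^ 2)); [apply Hsq |].
    apply continuity_2d_pt_plus; [apply continuity_2d_pt_minus; [exact HPt |] |].
    + apply continuity_2d_pt_mult; [| exact HP].
      apply (continuity_2d_pt_inv (fun u _ => u)); [apply continuity_2d_pt_id1 | exact Ht].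
    + apply continuity_2d_pt_mult; [exact Hdamp | exact HPth].
  - apply continuity_2d_pt_mult.
    + apply (continuity_1d_2d_pt_comp exp (fun u v => 2 * P u v)); [apply Hexp |].
      apply continuity_2d_pt_mult; [apply Hcst | exact HP].
    + apply (continuity_1d_2d_pt_comp (fun y => y ^ 2)); [apply Hsq |].
      apply continuity_2d_pt_plus; [exact HQt |].
      apply continuity_2d_pt_mult; [exact Hdamp | exact HQth].
Qed.

Lemma energy_nonneg sg P Q t th : 0 <= energy sg P Q t th.
Proof.
  unfold energy. apply Rplus_le_le_0_compat; [apply pow2_ge_0 |].
  apply Rmult_le_pos; [left; apply exp_pos | apply pow2_ge_0].
Qed.

Lemma energy_periodic sg P Q : periodic_th P -> periodic_th Q ->
  forall t th, energy sg P Q t (th + 2 * PI) = energy sg P Q t th.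
Proof.
  intros HP HQ t th.
  assert (Htau : forall f, periodic_th f -> d_tau f t (th + 2 * PI) = d_tau f t th)
    by (intros f Hf; apply Derive_ext; intros u; apply Hf).
  assert (Hth : forall f, periodic_th f -> d_th f t (th + 2 * PI) = d_th f t th)
    by (intros f Hf; apply Derive_periodic, Hf).
  unfold energy. rewrite HP, !Htau, !Hth by assumption. reflexivity.
Qed.

Definition sup_energy (P Q : R -> R -> R) (t : R) : R :=
  sup_th (energy 1 P Q t) + sup_th (energy (-1) P Q t).

Lemma F_sup_energy P Q t : F P Q t = / 2 * sup_energy P Q t.
Proof.
  unfold F, sup_energy. rewrite Rmult_plus_distr_l.
  f_equal; f_equal; f_equal; apply functional_extensionality; intros th; unfold energy; ring.
Qed.

Section GowdySolution.

Variables (P Q : R -> R -> R) (tau1 tau2 : R).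
Hypothesis P_smooth : smooth2 P.
Hypothesis Q_smooth : smooth2 Q.
Hypothesis P_periodic : periodic_th P.
Hypothesis Q_periodic : periodic_th Q.
Hypothesis solves : forall t th, tau1 <= t <= tau2 -> gowdy_equations P Q t th.
Hypothesis two_le_tau1 : 2 <= tau1.
Hypothesis P_bounds : forall t th, tau1 <= t <= tau2 -> 1 <= P t th <= t - 1.

Lemma energy_sup_step sg eta : sg = 1 \/ sg = -1 -> 0 < eta -> exists d, 0 < d /\
  forall r s, tau1 <= r -> r < s -> s <= tau2 -> s - r < d ->
    sup_th (energy sg P Q s) - sup_th (energy sg P Q r)
    <= (s - r) * (- (/ 2 + / s) * sup_th (energy sg P Q s)
                  + (/ 2 - / s) * sup_th (energy (- sg) P Q s) + eta).
Proof.
  intros Hsg.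
  apply (sup_th_step (energy sg P Q) (energy (- sg) P Q) sg tau1 tau2 Hsg two_le_tau1).
  - intros s th Hs. apply continuous_energy; [lra | apply P_smooth | apply Q_smooth].
  - intros s th Hs. apply continuous_energy; [lra | apply P_smooth | apply Q_smooth].
  - intros. apply energy_nonneg.
  - intros. apply energy_nonneg.
  - apply energy_periodic; assumption.
  - apply energy_periodic; assumption.
  - intros th0 s0 s Hs.
    apply energy_derivative_along_characteristic;
      [exact Hsg | exact P_smooth | exact Q_smooth | lra | apply solves, Hs | apply P_bounds, Hs].
Qed.

Lemma sup_energy_step eta : 0 < eta -> exists d, 0 < d /\
  forall r s, tau1 <= r -> r < s -> s <= tau2 -> s - r < d ->
    sup_energy P Q s - sup_energy P Q r <= (s - r) * (- (2 / s) * sup_energy P Q s + eta).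
Proof.
  intros Heta.
  destruct (energy_sup_step 1 (eta / 2) ltac:(lra) ltac:(lra)) as [d1 [Hd1 Hstep1]].
  destruct (energy_sup_step (-1) (eta / 2) ltac:(lra) ltac:(lra)) as [d2 [Hd2 Hstep2]].
  replace (- (1)) with (-1) in Hstep1 by ring.
  replace (- -1) with 1 in Hstep2 by ring.
  exists (Rmin d1 d2). split; [apply Rmin_glb_lt; assumption |].
  intros r s Hr Hrs Hs Hd.
  specialize (Hstep1 r s Hr Hrs Hs (Rlt_le_trans _ _ _ Hd (Rmin_l _ _))).
  specialize (Hstep2 r s Hr Hrs Hs (Rlt_le_trans _ _ _ Hd (Rmin_r _ _))).
  unfold sup_energy. replace (2 / s) with (/ 2 + / s - (/ 2 - / s)) by (unfold Rdiv; ring).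
  lra.
Qed.

Lemma sup_energy_nonneg t : tau1 <= t <= tau2 -> 0 <= sup_energy P Q t.
Proof.
  intros Ht.
  assert (Hsup : forall sg, 0 <= sup_th (energy sg P Q t)).
  { intros sg. apply Rle_trans with (energy sg P Q t 0); [apply energy_nonneg |].
    apply sup_th_continuous_periodic; [| apply energy_periodic; assumption].
    intros th. apply continuous_energy; [lra | apply P_smooth | apply Q_smooth]. }
  unfold sup_energy. pose proof (Hsup 1). pose proof (Hsup (-1)). lra.
Qed.

End GowdySolution.

Theorem lemma1 (P Q : R -> R -> R) (tau1 tau2 : R)
  (HPs : smooth2 P) (HQs : smooth2 Q)
  (HPp : periodic_th P) (HQp : periodic_th Q)
  (HeqP : forall t th, tau1 <= t <= tau2 ->
     d_tau (d_tau P) t th - exp (-2 * t) * d_th (d_th P) t th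
     - exp (2 * P t th) * ((d_tau Q t th) ^ 2 - exp (-2 * t) * (d_th Q t th) ^ 2) = 0)
  (HeqQ : forall t th, tau1 <= t <= tau2 ->
     d_tau (d_tau Q) t th - exp (-2 * t) * d_th (d_th Q) t th
     + 2 * (d_tau P t th * d_tau Q t th - exp (-2 * t) * d_th P t th * d_th Q t th) = 0)
  (H12 : 2 <= tau1 <= tau2)
  (HPb : forall t th, tau1 <= t <= tau2 -> 1 <= P t th <= t - 1) :
  forall t, tau1 <= t <= tau2 -> F P Q t <= F P Q tau1 * (tau1 / t) ^ 2.
Proof.
  intros t Ht.
  assert (Hsol : forall t th, tau1 <= t <= tau2 -> gowdy_equations P Q t th)
    by (intros s th Hs; split; [apply HeqP | apply HeqQ]; exact Hs).
  assert (Hdecay : t ^ 2 * sup_energy P Q t <= tau1 ^ 2 * sup_energy P Q tau1).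
  { apply (square_mul_nonincreasing (sup_energy P Q) tau1 tau2); [lra | | | exact Ht].
    - exact (sup_energy_nonneg P Q tau1 tau2 HPs HQs HPp HQp (proj1 H12)).
    - exact (sup_energy_step P Q tau1 tau2 HPs HQs HPp HQp Hsol (proj1 H12) HPb). }
  rewrite !F_sup_energy.
  replace (/ 2 * sup_energy P Q tau1 * (tau1 / t) ^ 2)
    with (/ 2 * (tau1 ^ 2 * sup_energy P Q tau1) / t ^ 2) by (field; lra).
  assert (Ht2 : 0 < t ^ 2) by (apply pow_lt; lra).
  apply (Rle_div_r _ _ _ Ht2). lra.
Qed.
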